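(* Let $n\ge 1$. Every $X$-circuit $M$ on $n$ qubits satisfies $M\bullet(Z\otimes I\otimes\cdots\otimes I)=I\otimes\cdots\otimes I\otimes Z$.
   Context: Matrices: $X=\begin{bmatrix}0&1\\1&0\end{bmatrix}$, $Z=\begin{bmatrix}1&0\\0&-1\end{bmatrix}$, $H=\frac{1}{\sqrt2}\begin{bmatrix}1&1\\1&-1\end{bmatrix}$, $CZ=\mathrm{diag}(1,1,1,-1)$. Operators on $n$ qubits act on $(\mathbb{R}^2)^{\otimes n}$, qubit $1$ being the first tensor factor; a one-qubit gate on qubit $i$, or a two-qubit gate on qubits $i,i+1$ (with qubit $i$ the first tensor factor of the gate, called its upper qubit), denotes that matrix tensored with identities on the other qubits. For matrices $C,P$, $C\bullet P=CPC^{-1}$. A circuit is a finite sequence of gates $g_1,\dots,g_k$ ($g_1$ applied first); its operator is $g_k\cdots g_1$, and $M\bullet P$ means (operator of $M$)$\bullet P$. Derived generators (formal symbols with defining gate sequences; in a two-qubit symbol subscript $1$ is the upper, $2$ the lower qubit; '';'' separates steps): $E_1$ = empty, $E_2$ = $Z$; $D_1$ = $CZ;\,H_1,H_2;\,CZ;\,H_1,H_2;\,CZ;\,H_2$; $D_2$ = $H_1;\,CZ;\,H_1,H_2;\,CZ;\,H_2$; $D_3$ = $H_1,H_2;\,CZ;\,H_1,H_2;\,CZ;\,H_2$; $D_4$ = $H_1;\,CZ;\,H_1,H_2;\,CZ;\,H_2;\,CZ$. An $X$-circuit on $n$ qubits is a sequence of symbols of the form $D_{d_1}$ on qubits $1,2$,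 then $D_{d_2}$ on qubits $2,3$, ..., then $D_{d_{n-1}}$ on qubits $n-1,n$, then $E_e$ on qubit $n$ (for $n=1$ it is just $E_e$), with $d_i\in\{1,2,3,4\}$, $e\in\{1,2\}$. *)

From HB Require Import structures.
From mathcomp Require Import all_boot all_order all_algebra.
From mathcomp Require Import reals.
Set Implicit Arguments. Unset Strict Implicit. Unset Printing Implicit Defensive.
Import Order.TTheory GRing.Theory Num.Theory.
Local Open Scope ring_scope.

Section Gates.
Variable R : realType.

(* basic one- and two-qubit matrices; basis index 0 = |0>, 1 = |1>;
   for two qubits, index 2*a+b = |a b> with a the upper (first) qubit *)
Definition Xm : 'M[R]_2 := \matrix_(i, j) (if i != j :> nat then 1 else 0).
Definition Zm : 'M[R]_2 := \matrix_(i, j) (if i == j :> nat then (if i == 0 :> nat then 1 else -1) else 0).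
Definition Hm : 'M[R]_2 :=
  (Num.sqrt 2)^-1 *: \matrix_(i, j) (if (i == 1 :> nat) && (j == 1 :> nat) then -1 else 1).
Definition CZm : 'M[R]_4 :=
  \matrix_(i, j) (if i == j :> nat then (if i == 3 :> nat then -1 else 1) else 0).

(* Computational basis of (R^2)^{\otimes n}: index r < 2^n, qubit i (1 <= i <= n)
   is the bit of weight 2^(n-i), so qubit 1 is the first (most significant)
   tensor factor. *)
Definition qbit (n i r : nat) : nat := odd (r %/ 2 ^ (n - i)).

Definition agree_outside (n : nat) (P : nat -> bool) (r c : nat) : bool :=
  [forall j : 'I_n, ~~ P j.+1 ==> (qbit n j.+1 r == qbit n j.+1 c)].

(* U on qubit i tensored with identities on the other qubits (entrywise
   unfolding of the Kronecker product I ⊗ ... ⊗ U ⊗ ... ⊗ I) *)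
Definition gate1 (n i : nat) (U : 'M[R]_2) : 'M[R]_(2 ^ n) :=
  \matrix_(r, c)
    (if agree_outside n (pred1 i) r c
     then U (inord (qbit n i r)) (inord (qbit n i c)) else 0).

(* G on qubits i, i+1 (qubit i = upper = first tensor factor of G) *)
Definition gate2 (n i : nat) (G : 'M[R]_4) : 'M[R]_(2 ^ n) :=
  \matrix_(r, c)
    (if agree_outside n (fun j => (j == i) || (j == i.+1)) r c
     then G (inord (2 * qbit n i r + qbit n i.+1 r))
            (inord (2 * qbit n i c + qbit n i.+1 c))
     else 0).

(* circuits: g_1 applied first; operator g_k ... g_1 *)
Definition circuit_op (n : nat) (s : seq 'M[R]_(2 ^ n)) : 'M[R]_(2 ^ n) :=
  foldl (fun acc g => g *m acc) 1%:M s.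

Definition bul (m : nat) (C P : 'M[R]_m) : 'M[R]_m := C *m P *m invmx C.

Inductive Dsym := D1 | D2 | D3 | D4.
Inductive Esym := E1 | E2.

Definition Dgates (n i : nat) (d : Dsym) : seq 'M[R]_(2 ^ n) :=
  let cz := gate2 n i CZm in
  let h1 := gate1 n i Hm in
  let h2 := gate1 n i.+1 Hm in
  match d with
  | D1 => [:: cz; h1; h2; cz; h1; h2; cz; h2]
  | D2 => [:: h1; cz; h1; h2; cz; h2]
  | D3 => [:: h1; h2; cz; h1; h2; cz; h2]
  | D4 => [:: h1; cz; h1; h2; cz; h2; cz]
  end.

Definition Egates (n i : nat) (e : Esym) : seq 'M[R]_(2 ^ n) :=
  match e with
  | E1 => [::]
  | E2 => [:: gate1 n i Zm]
  end.

(* the X-circuit D_{d_1} on (1,2), ..., D_{d_{n-1}} on (n-1,n), then E_e on n,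
   expanded into its gate sequence; ds = [:: d_1; ...; d_{n-1}] *)
Definition xcircuit (n : nat) (ds : seq Dsym) (e : Esym) : seq 'M[R]_(2 ^ n) :=
  flatten [seq Dgates n p.1 p.2 | p <- zip (iota 1 n.-1) ds] ++ Egates n n e.

End Gates.

From HB Require Import structures.
From mathcomp Require Import all_boot all_order all_algebra.
From mathcomp Require Import reals mxtens.
From mathcomp Require Import zify ring lra.
Import Order.TTheory GRing.Theory Num.Theory.
Local Open Scope ring_scope.
Set Implicit Arguments. Unset Strict Implicit. Unset Printing Implicit Defensive.

(* Track Z_1 (Pauli Z on qubit 1) through the circuit.  The block D_d on
   qubits i, i+1 is a 4x4 matrix Dmx d placed there, and Dmx d conjugates
   Z (x) I to I (x) Z: every D_d contains the gates CZ; H1, H2; CZ; H2, which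
   turn X (x) I into I (x) Z, the gates before them turn Z (x) I into X (x) I,
   and the final CZ of D_4 fixes I (x) Z.  So the D-blocks move Z_1 step by step
   to Z_n, which E_e (I or Z_n) commutes with.  The 4x4 identities lift to
   qubits i, i+1 because a gate is a local operator: the matrix acting as G on
   the bits of a basis state in a set S of qubits and trivially elsewhere is
   multiplicative in G, as those bits range freely over all values. *)

Lemma eq_binary_digits m x y : (x < 2 ^ m)%N -> (y < 2 ^ m)%N ->
  (forall t, (t < m)%N -> odd (x %/ 2 ^ t) = odd (y %/ 2 ^ t)) -> x = y.
Proof.
elim: m x y => [|m IHm] x y; first by rewrite !ltnS !leqn0 => /eqP -> /eqP ->.
move=> ltx lty eq_digits.
have eq_half : x./2 = y./2.
  apply: IHm; rewrite -?divn2 ?ltn_divLR -?expnSr // => t lt_tm.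
  by rewrite -!divnMA -expnS; apply: eq_digits.
have := eq_digits 0%N isT; rewrite !divn1 => eq_odd.
by rewrite -[x]odd_double_half -[y]odd_double_half eq_odd eq_half.
Qed.

Lemma inord_bit (l : 'I_2) : inord (odd l) = l.
Proof. by apply/val_inj; case: l => [[|[|]] ?] //=; rewrite inordK. Qed.

Lemma bit_inord (b : bool) : odd (inord b : 'I_2) = b.
Proof. by case: b; rewrite inordK. Qed.

Lemma eq_inord_bit (a b : bool) : (inord a == inord b :> 'I_2) = (a == b).
Proof. by case: a; case: b; rewrite -val_eqE /= !inordK. Qed.

Lemma inord_bit2 (l : 'I_4) : inord (2 * (1 < l)%N + odd l) = l.
Proof. by apply/val_inj; case: l => [[|[|[|[|]]]] ?] //=; rewrite inordK. Qed.

Lemma bit2_inord (a b : bool) :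
  ((1 < (inord (2 * a + b) : 'I_4))%N = a) * (odd (inord (2 * a + b) : 'I_4) = b).
Proof. by case: a; case: b; rewrite inordK. Qed.

Lemma tensmx_inord (R : comPzRingType) (A B : 'M[R]_2) (a b c d : bool) :
  (A *t B : 'M_4) (inord (2 * a + b)) (inord (2 * c + d)) =
  A (inord a) (inord c) * B (inord b) (inord d).
Proof.
rewrite mxE; congr (A _ _ * B _ _); apply/val_inj; rewrite /= !inordK //.
all: by case: a; case: b; case: c; case: d.
Qed.

Section QubitBits.
Variable n : nat.

Definition bits (r : nat) : {ffun 'I_n -> bool} :=
  [ffun j : 'I_n => odd (r %/ 2 ^ (n - j.+1))].

Lemma qbit_bits (j : 'I_n) r : qbit n j.+1 r = bits r j.
Proof. by rewrite /qbit ffunE. Qed.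

Lemma bits_inj : injective (fun r : 'I_(2 ^ n) => bits r).
Proof.
move=> x y /ffunP eq_bits.
apply/val_inj/(eq_binary_digits (ltn_ord x) (ltn_ord y)) => t lt_tn.
have lt_jn : (n - t.+1 < n)%N by lia.
have := eq_bits (Ordinal lt_jn); rewrite !ffunE /=.
by have -> : (n - (n - t.+1).+1 = t)%N by lia.
Qed.

Lemma bits_surj :
  exists of_bits : {ffun 'I_n -> bool} -> 'I_(2 ^ n), forall f, bits (of_bits f) = f.
Proof.
have card_bits : (#|{ffun 'I_n -> bool}| <= #|'I_(2 ^ n)|)%N.
  by rewrite card_ffun card_bool !card_ord.
have [of_bits _ of_bitsK] := inj_card_bij bits_inj card_bits.
by exists of_bits.
Qed.

Lemma agree_outsideE S r c : agree_outside n S r c =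
  [forall j : 'I_n, ~~ S j.+1 ==> (bits r j == bits c j)].
Proof.
by apply: eq_forallb => j; rewrite !qbit_bits; case: (bits r j); case: (bits c j).
Qed.

Lemma agree_outside_refl S r : agree_outside n S r r.
Proof. by apply/forallP => j; rewrite eqxx implybT. Qed.

Lemma agree_outside_trans S r k : agree_outside n S r k ->
  agree_outside n S k =1 agree_outside n S r.
Proof.
move=> /forallP agree_rk c; apply: eq_forallb => j.
by case: (S j.+1) (agree_rk j) => //= /eqP ->.
Qed.

Lemma eq_agree_outside S1 S2 : S1 =1 S2 -> agree_outside n S1 =2 agree_outside n S2.
Proof. by move=> eqS r c; apply: eq_forallb => j; rewrite eqS. Qed.

Lemma agree_outside_predU1 S (j : 'I_n) r c : ~~ S j.+1 ->
  agree_outside n S r c =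
  agree_outside n (predU1 j.+1 S) r c && (bits r j == bits c j).
Proof.
move=> notSj; rewrite !agree_outsideE.
apply/forallP/andP => [agree_rc|[/forallP agree_rc eq_j] t].
  split; last by have := agree_rc j; rewrite (negbTE notSj).
  by apply/forallP => t; apply/implyP; rewrite negb_or => /andP[_]; apply/implyP.
case: (eqVneq t j) => [->|neq_tj]; first by rewrite eq_j implybT.
by have := agree_rc t; move: neq_tj; rewrite /= eqSS -val_eqE => /negbTE ->.
Qed.

End QubitBits.

(* Within each class of basis states agreeing outside [S], [loc] is a bijection
   onto the local basis ['I_k]. *)
Definition local_chart n k (S : pred nat) (loc : nat -> 'I_k) :=
  forall r : 'I_(2 ^ n), exists2 g : 'I_k -> 'I_(2 ^ n),
    (forall l, agree_outside n S r (g l) /\ loc (g l) = l) &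
    (forall c : 'I_(2 ^ n), agree_outside n S r c -> g (loc c) = c).

Section LocalOperator.
Variables (R : comUnitRingType) (n k : nat) (S : pred nat) (loc : nat -> 'I_k).

Definition localmx (G : 'M[R]_k) : 'M[R]_(2 ^ n) :=
  \matrix_(r, c) (if agree_outside n S r c then G (loc r) (loc c) else 0).

Hypothesis loc_chart : local_chart n S loc.

Lemma localmxM G G' : localmx G *m localmx G' = localmx (G *m G').
Proof.
apply/matrixP => r c; rewrite !mxE.
under eq_bigr => m _ do rewrite !mxE.
have [agree_rc|nagree_rc] := boolP (agree_outside n S r c); last first.
  apply: big1 => m _; case: ifP => [agree_rm|_]; last by rewrite mul0r.
  by rewrite (agree_outside_trans agree_rm) (negbTE nagree_rc) mulr0.
rewrite (bigID (fun m : 'I_(2 ^ n) => agree_outside n S r m)) /=.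
rewrite [X in _ + X]big1 ?addr0 => [|m /negbTE ->]; last by rewrite mul0r.
have [g gK locK] := loc_chart r.
rewrite (reindex_onto g loc) /=; last by move=> m /locK.
apply: eq_big => l; first by have [-> ->] := gK l; rewrite eqxx.
move=> _; have [agree_rg ->] := gK l.
by rewrite agree_rg (agree_outside_trans agree_rg) agree_rc.
Qed.

Lemma localmx1 : localmx 1%:M = 1%:M.
Proof.
apply/matrixP => r c; rewrite !mxE.
case: ifP => [agree_rc|nagree_rc]; last first.
  by case: eqP => // eq_rc; rewrite eq_rc agree_outside_refl in nagree_rc.
have [g _ locK] := loc_chart r.
case: (eqVneq r c) => [-> | neq_rc]; first by rewrite eqxx.
congr ((nat_of_bool _)%:R); apply: negbTE; apply: contra_neq neq_rc => eq_loc.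
by rewrite -(locK r) ?agree_outside_refl // eq_loc locK.
Qed.

Lemma localmx_unit G : G \in unitmx -> localmx G \in unitmx.
Proof.
move=> unitG; have [] := @mulmx1_unit _ _ (localmx G) (localmx (invmx G)) => //.
by rewrite localmxM mulmxV // localmx1.
Qed.

End LocalOperator.

Section Charts.
Variable n : nat.

Lemma qubit_index i : (0 < i <= n)%N -> exists j : 'I_n, i = j.+1.
Proof.
move=> /andP[i_gt0 i_le_n]; have lt_jn : (i.-1 < n)%N by lia.
by exists (Ordinal lt_jn); rewrite /=; lia.
Qed.

Lemma qubit_pair_index i :
  (0 < i < n)%N -> exists j j' : 'I_n, i = j.+1 /\ i.+1 = j'.+1.
Proof.
move=> /andP[i_gt0 i_lt_n].
have [j eq_j] : exists j : 'I_n, i = j.+1 by apply: qubit_index; lia.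
have [j' eq_j'] : exists j' : 'I_n, i.+1 = j'.+1 by apply: qubit_index; lia.
by exists j, j'.
Qed.

Lemma qubit_chart i : (0 < i <= n)%N ->
  local_chart n (pred1 i) (fun r => inord (qbit n i r) : 'I_2).
Proof.
move=> /qubit_index[j ->] r.
have [of_bits of_bitsK] := bits_surj n.
exists (fun l : 'I_2 => of_bits [ffun t => if t == j then odd l else bits n r t]).
  move=> l /=; rewrite agree_outsideE qbit_bits of_bitsK ffunE eqxx inord_bit; split=> //.
  apply/forallP => t; apply/implyP; rewrite /= eqSS val_eqE => neq_tj.
  by rewrite !ffunE (negbTE neq_tj).
move=> c; rewrite agree_outsideE => /forallP agree_rc.
apply: (@bits_inj n); rewrite /= of_bitsK; apply/ffunP => t.
rewrite ffunE qbit_bits bit_inord; case: (eqVneq t j) => [-> //|neq_tj].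
apply/eqP; have := agree_rc t; move: neq_tj.
by rewrite /= eqSS -val_eqE => /negbTE ->.
Qed.

Lemma qubit_pair_chart i : (0 < i < n)%N ->
  local_chart n (fun t => (t == i) || (t == i.+1))
    (fun r => inord (2 * qbit n i r + qbit n i.+1 r) : 'I_4).
Proof.
move=> /qubit_pair_index[j [j' [eq_j eq_j']]].
have neq_j'j : j' != j by rewrite -val_eqE /=; lia.
rewrite eq_j' eq_j => r.
have [of_bits of_bitsK] := bits_surj n.
exists (fun l : 'I_4 => of_bits
  [ffun t => if t == j then (1 < l)%N else if t == j' then odd l else bits n r t]).
  move=> l /=; rewrite agree_outsideE (qbit_bits j) (qbit_bits j') !of_bitsK !ffunE.
  rewrite eqxx (negbTE neq_j'j) eqxx inord_bit2; split=> //.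
  apply/forallP => t; apply/implyP.
  rewrite /= !eqSS negb_or !val_eqE => /andP[neq_tj neq_tj'].
  by rewrite !ffunE (negbTE neq_tj) (negbTE neq_tj').
move=> c; rewrite agree_outsideE => /forallP agree_rc.
apply: (@bits_inj n); rewrite /= of_bitsK; apply/ffunP => t.
rewrite ffunE (qbit_bits j) (qbit_bits j') !bit2_inord.
case: (eqVneq t j) => [-> //|neq_tj]; case: (eqVneq t j') => [-> //|neq_tj'].
apply/eqP; have := agree_rc t; move: neq_tj neq_tj'.
by rewrite /= !eqSS -!val_eqE /= => /negbTE -> /negbTE ->.
Qed.

End Charts.

Section QubitGates.
Variables (R : realType) (n : nat).
Local Notation I2 := (1%:M : 'M[R]_2).

Lemma gate1E i (U : 'M[R]_2) :
  gate1 n i U = localmx n (pred1 i) (fun r => inord (qbit n i r) : 'I_2) U.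
Proof. by []. Qed.

Lemma gate2E i (G : 'M[R]_4) :
  gate2 n i G = localmx n (fun t => (t == i) || (t == i.+1))
                  (fun r => inord (2 * qbit n i r + qbit n i.+1 r) : 'I_4) G.
Proof. by []. Qed.

Lemma gate1_unit i (U : 'M[R]_2) :
  (0 < i <= n)%N -> U \in unitmx -> gate1 n i U \in unitmx.
Proof. by move=> /qubit_chart chart; rewrite gate1E; apply: localmx_unit. Qed.

Lemma gate2M i (G G' : 'M[R]_4) :
  (0 < i < n)%N -> gate2 n i G *m gate2 n i G' = gate2 n i (G *m G').
Proof. by move=> /qubit_pair_chart chart; rewrite !gate2E; apply: localmxM. Qed.

Lemma gate2_unit i (G : 'M[R]_4) :
  (0 < i < n)%N -> G \in unitmx -> gate2 n i G \in unitmx.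
Proof. by move=> /qubit_pair_chart chart; rewrite gate2E; apply: localmx_unit. Qed.

Lemma gate1_tensl i (U : 'M[R]_2) :
  (0 < i < n)%N -> gate1 n i U = gate2 n i (U *t I2).
Proof.
move=> /qubit_pair_index[j [j' [eq_j eq_j']]].
apply/matrixP => r c; rewrite mxE [RHS]mxE eq_j' eq_j.
rewrite (agree_outside_predU1 (j := j')); last by rewrite /= -eq_j' -eq_j; lia.
rewrite (@eq_agree_outside _ _ (fun t => (t == j.+1) || (t == j'.+1))); last first.
  by move=> t; rewrite /= orbC.
rewrite !qbit_bits tensmx_inord mxE eq_inord_bit.
by case: (agree_outside _ _ _ _); case: eqP; rewrite ?mulr1 ?mulr0.
Qed.

Lemma gate1_tensr i (U : 'M[R]_2) :
  (0 < i < n)%N -> gate1 n i.+1 U = gate2 n i (I2 *t U).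
Proof.
move=> /qubit_pair_index[j [j' [eq_j eq_j']]].
apply/matrixP => r c; rewrite mxE [RHS]mxE eq_j' eq_j.
rewrite (agree_outside_predU1 (j := j)); last by rewrite /= -eq_j' -eq_j; lia.
rewrite !qbit_bits tensmx_inord mxE eq_inord_bit.
by case: (agree_outside _ _ _ _); case: eqP; rewrite ?mul1r ?mul0r.
Qed.

End QubitGates.

Lemma mulmx_intertwine (R : pzRingType) m (A B P Q S : 'M[R]_m) :
  A *m P = Q *m A -> B *m Q = S *m B -> B *m A *m P = S *m (B *m A).
Proof. by move=> AP BQ; rewrite -mulmxA AP mulmxA BQ mulmxA. Qed.

Lemma tensmx_conjl (R : comPzRingType) m p (A P P' : 'M[R]_m) (Q : 'M[R]_p) :
  A *m P = P' *m A -> (A *t 1%:M) *m (P *t Q) = (P' *t Q) *m (A *t 1%:M).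
Proof. by move=> AP; rewrite !tensmx_mul AP mulmx1 mul1mx. Qed.

Lemma tensmx_conjr (R : comPzRingType) m p (A P P' : 'M[R]_p) (Q : 'M[R]_m) :
  A *m P = P' *m A -> (1%:M *t A) *m (Q *t P) = (Q *t P') *m (1%:M *t A).
Proof. by move=> AP; rewrite !tensmx_mul AP mulmx1 mul1mx. Qed.

Section TwoQubitClifford.
Variable R : realType.
Local Notation I2 := (1%:M : 'M[R]_2).
Local Notation X := (Xm R).
Local Notation Z := (Zm R).
Local Notation H := (Hm R).
Local Notation CZ := (CZm R).

Ltac entrywise :=
  apply/matrixP; case=> [[|[|[|[|?]]]] ?] //; case=> [[|[|[|[|?]]]] ?] //;
  rewrite !mxE !big_ord_recr !big_ord0 /= !mxE /=.

Lemma H_Z : H *m Z = X *m H. Proof. by entrywise; ring. Qed.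
Lemma H_X : H *m X = Z *m H. Proof. by entrywise; ring. Qed.

Lemma H_H : H *m H = 1%:M.
Proof.
have inv_sqrt2 : (Num.sqrt 2)^-1 * (Num.sqrt 2)^-1 = 2^-1 :> R.
  by rewrite -invfM -expr2 sqr_sqrtr.
by entrywise; nra.
Qed.

Lemma Z_Z : Z *m Z = 1%:M. Proof. by entrywise; ring. Qed.
Lemma CZ_CZ : CZ *m CZ = 1%:M. Proof. by entrywise; ring. Qed.
Lemma CZ_Z1 : CZ *m (Z *t I2) = (Z *t I2) *m CZ. Proof. by entrywise; ring. Qed.
Lemma CZ_Z2 : CZ *m (I2 *t Z) = (I2 *t Z) *m CZ. Proof. by entrywise; ring. Qed.
Lemma CZ_X1 : CZ *m (X *t I2) = (X *t Z) *m CZ. Proof. by entrywise; ring. Qed.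
Lemma CZ_Z1X2 : CZ *m (Z *t X) = (I2 *t X) *m CZ. Proof. by entrywise; ring. Qed.

End TwoQubitClifford.

Section DBlocks.
Variable R : realType.
Local Notation I2 := (1%:M : 'M[R]_2).
Local Notation X := (Xm R).
Local Notation Z := (Zm R).
Local Notation H := (Hm R).
Local Notation CZ := (CZm R).
Local Notation H1 := (H *t I2).
Local Notation H2 := (I2 *t H).

Definition xcore : 'M[R]_4 := H2 *m CZ *m H2 *m H1 *m CZ.

Definition Dmx (d : Dsym) : 'M[R]_4 :=
  match d with
  | D1 => xcore *m H2 *m H1 *m CZ
  | D2 => xcore *m H1
  | D3 => xcore *m H2 *m H1
  | D4 => CZ *m xcore *m H1
  end.

(* X (x) I is mapped through X (x) Z, Z (x) Z, Z (x) X and I (x) X to I (x) Z. *)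
Lemma xcore_X1 : xcore *m (X *t I2) = (I2 *t Z) *m xcore.
Proof.
apply: (mulmx_intertwine (CZ_X1 R)).
apply: (mulmx_intertwine (tensmx_conjl Z (H_X R))).
apply: (mulmx_intertwine (tensmx_conjr Z (H_Z R))).
apply: (mulmx_intertwine (CZ_Z1X2 R)).
exact: (tensmx_conjr I2 (H_X R)).
Qed.

Lemma Dmx_Z1 d : Dmx d *m (Z *t I2) = (I2 *t Z) *m Dmx d.
Proof.
have H1_Z1 : H1 *m (Z *t I2) = (X *t I2) *m H1 := tensmx_conjl I2 (H_Z R).
have H2_X1 : H2 *m (X *t I2) = (X *t I2) *m H2 := tensmx_conjr X (comm_mx1 H).
case: d => /=.
- apply: (mulmx_intertwine (CZ_Z1 R)); apply: (mulmx_intertwine H1_Z1).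
  by apply: (mulmx_intertwine H2_X1); apply: xcore_X1.
- by apply: (mulmx_intertwine H1_Z1); apply: xcore_X1.
- apply: (mulmx_intertwine H1_Z1).
  by apply: (mulmx_intertwine H2_X1); apply: xcore_X1.
- apply: (mulmx_intertwine H1_Z1).
  by apply: (mulmx_intertwine xcore_X1); apply: CZ_Z2.
Qed.

Lemma Dmx_unit d : Dmx d \in unitmx.
Proof.
have unitH : H \in unitmx by case/mulmx1_unit: (H_H R).
have unitCZ : CZ \in unitmx by case/mulmx1_unit: (CZ_CZ R).
have unitH1 : H1 \in unitmx by apply: tensmx_unit; rewrite ?unitmx1.
have unitH2 : H2 \in unitmx by apply: tensmx_unit; rewrite ?unitmx1.
by case: d; rewrite /= /xcore !unitmx_mul ?unitH1 ?unitH2 ?unitCZ.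
Qed.

End DBlocks.

Definition conjugates (R : comUnitRingType) m (C P Q : 'M[R]_m) :=
  C \in unitmx /\ C *m P = Q *m C.

Lemma conjugatesM (R : comUnitRingType) m (A B P Q S : 'M[R]_m) :
  conjugates A P Q -> conjugates B Q S -> conjugates (B *m A) P S.
Proof.
move=> [unitA AP] [unitB BQ]; split; first by rewrite unitmx_mul unitB unitA.
exact: mulmx_intertwine AP BQ.
Qed.

Lemma conjugates1 (R : comUnitRingType) m (P : 'M[R]_m) : conjugates 1%:M P P.
Proof. by split; rewrite ?unitmx1 ?mul1mx ?mulmx1. Qed.

Lemma bul_conjugates (R : realType) m (C P Q : 'M[R]_m) :
  conjugates C P Q -> bul C P = Q.
Proof. by move=> [unitC CP]; rewrite /bul CP -mulmxA mulmxV ?mulmx1. Qed.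

Section XCircuit.
Variables (R : realType) (n : nat).
Local Notation Zq i := (gate1 n i (Zm R)).

Lemma foldl_circuit_op (A : 'M[R]_(2 ^ n)) s :
  foldl (fun acc g => g *m acc) A s = circuit_op s *m A.
Proof.
elim: s A => [|g s IHs] A /=; first by rewrite /circuit_op /= mul1mx.
by rewrite /circuit_op /= !IHs mulmx1 mulmxA.
Qed.

Lemma circuit_op_cat (s1 s2 : seq 'M[R]_(2 ^ n)) :
  circuit_op (s1 ++ s2) = circuit_op s2 *m circuit_op s1.
Proof. by rewrite {1}/circuit_op foldl_cat foldl_circuit_op. Qed.

Lemma circuit_op_Dgates i d :
  (0 < i < n)%N -> circuit_op (Dgates R n i d) = gate2 n i (Dmx R d).
Proof.
move=> i_lt; rewrite /Dgates (gate1_tensl _ i_lt) (gate1_tensr _ i_lt).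
by case: d; rewrite /circuit_op /= /xcore mulmx1 -!(gate2M _ _ i_lt) !mulmxA.
Qed.

Lemma Dgates_conjugates i d : (0 < i < n)%N ->
  conjugates (circuit_op (Dgates R n i d)) (Zq i) (Zq i.+1).
Proof.
move=> i_lt; rewrite circuit_op_Dgates //.
rewrite (gate1_tensl _ i_lt) (gate1_tensr _ i_lt).
split; first exact: gate2_unit (Dmx_unit R d).
by rewrite !gate2M // Dmx_Z1.
Qed.

Lemma Dblocks_conjugates i ds : (0 < i)%N -> (i + size ds)%N = n ->
  conjugates
    (circuit_op (flatten [seq Dgates R n p.1 p.2 | p <- zip (iota i (size ds)) ds]))
    (Zq i) (Zq n).
Proof.
elim: ds i => [|d ds IHds] i i_gt0 /=; rewrite ?addn0 => size_n.
  by rewrite size_n; apply: conjugates1.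
rewrite circuit_op_cat; apply: (conjugatesM (Q := Zq i.+1)).
  by apply: Dgates_conjugates; rewrite i_gt0 -size_n /=; lia.
by apply: IHds => //; rewrite -size_n /=; lia.
Qed.

Lemma Egates_conjugates e : (0 < n)%N ->
  conjugates (circuit_op (Egates R n n e)) (Zq n) (Zq n).
Proof.
move=> n_gt0; rewrite /circuit_op; case: e => /=; first exact: conjugates1.
rewrite mulmx1; split=> //; apply: gate1_unit; first by rewrite n_gt0 leqnn.
by case/mulmx1_unit: (Z_Z R).
Qed.

End XCircuit.

Theorem proposition4p13 (R : realType) (n : nat) (hn : (1 <= n)%N)
    (ds : seq Dsym) (hds : size ds = n.-1) (e : Esym) :
  bul (circuit_op (xcircuit R n ds e)) (gate1 n 1 (Zm R)) = gate1 n n (Zm R).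
Proof.
have D_part := @Dblocks_conjugates R n 1 ds isT.
rewrite /xcircuit -hds circuit_op_cat; apply: bul_conjugates.
apply: conjugatesM (D_part _) (Egates_conjugates _ _ hn).
by rewrite hds; lia.
Qed.
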